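(* Let $\Xi,\Gamma,\Upsilon,\delta_s>0$, $L\ge1$, $\beta>1$, and $c_1,c_2>0$. Suppose $\delta_s\le2\Gamma\Xi^2$, set $\delta_h=c_1\delta_s$ and $\Delta_h=c_2\delta_s$, and define $$\lambda_W(\xi_s)=e^{\delta_s}\Upsilon L\Xi^3,\quad \lambda_X(\xi_s)=e^{\delta_s}\Upsilon(2\Gamma\Xi^2+1),$$ $$\lambda_W(\xi_h)=2e^{\delta_h}\Upsilon L\Xi^3\big(1+\tfrac1{\Delta_h}\big),\quad \lambda_X(\xi_h)=e^{\delta_h}\Upsilon\big(\beta+2\Gamma\Xi^2(\beta+1)(1+\tfrac1{\Delta_h})\big).$$ Then $\lambda_W(\xi_h)<\lambda_W(\xi_s)$ when $$c_1+\frac1{\delta_s}\log\Big(2\Big(1+\frac1{c_2\delta_s}\Big)\Big)<1,$$ and $\lambda_X(\xi_h)<\lambda_X(\xi_s)$ when $$c_1+\frac1{\delta_s}\log\Big(2\Gamma\Xi^2(1+\beta)\Big(1+\frac1{c_2\delta_s}\Big)+\beta\Big)-\frac1{\delta_s}\log(2\Gamma\Xi^2+1)<1.$$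
   Context: These quantities are the attention stability constants for full softmax attention (semantic dispersion $\delta_s$, i.e. the largest gap between query–key dot products of any query, token norms $\le\Xi$, $\|{\mathbf W}\|\le\Gamma$, $\|{\mathbf V}\|\le\Upsilon$, sequence length $L$) and for $k$-heavy-hitter sparse attention (semantic dispersion $\delta_h$ among unmasked keys, minimum gap $\Delta_h$ between unmasked and masked dot products, at most $\beta k$ queries per key). *)

From Stdlib Require Import Reals.
Open Scope R_scope.

Definition lamW_s (Xi Ups ds : R) (L : nat) : R :=
  exp ds * Ups * INR L * Xi ^ 3.
Definition lamX_s (Xi Gam Ups ds : R) : R :=
  exp ds * Ups * (2 * Gam * Xi ^ 2 + 1).

Definition lamW_h (Xi Ups dh Dh : R) (L : nat) : R :=
  2 * exp dh * Ups * INR L * Xi ^ 3 * (1 + / Dh).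
Definition lamX_h (Xi Gam Ups dh Dh beta : R) : R :=
  exp dh * Ups * (beta + 2 * Gam * Xi ^ 2 * (beta + 1) * (1 + / Dh)).

(* Both comparisons have the shape [exp dh * A < exp ds * B] with [A, B > 0];
   taking logarithms this is [dh + ln A < ds + ln B], and with [dh = c1 ds]
   the hypotheses of the corollary are exactly this inequality divided by [ds]. *)
From Stdlib Require Import Reals Lra Lia.
Open Scope R_scope.

Lemma exp_mul_lt_of_ln_lt (a b X Y : R) : 0 < X -> 0 < Y ->
  a + ln X < b + ln Y -> exp a * X < exp b * Y.
Proof.
  intros hX hY H.
  rewrite <- (exp_ln X) by exact hX; rewrite <- (exp_ln Y) by exact hY.
  rewrite <- !exp_plus; now apply exp_increasing.
Qed.

Lemma mul_lt_of_div_lt (c u ds : R) : 0 < ds -> c + / ds * u < 1 -> c * ds + u < ds.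
Proof.
  intros hds H.
  replace (c * ds + u) with (ds * (c + / ds * u)) by (field; lra).
  apply (Rmult_lt_compat_l ds) in H; lra.
Qed.

Lemma lamW_h_lt_lamW_s (Xi Ups ds dh Dh : R) (L : nat) :
  0 < Xi -> 0 < Ups -> (1 <= L)%nat -> 0 < Dh ->
  dh + ln (2 * (1 + / Dh)) < ds -> lamW_h Xi Ups dh Dh L < lamW_s Xi Ups ds L.
Proof.
  intros hXi hUps hL hDh H.
  assert (hinvDh : 0 < / Dh) by now apply Rinv_0_lt_compat.
  assert (hscale : 0 < Ups * INR L * Xi ^ 3).
  { assert (0 < INR L) by (apply lt_0_INR; lia).
    apply Rmult_lt_0_compat; [now apply Rmult_lt_0_compat | now apply pow_lt]. }
  assert (hexp : exp dh * (2 * (1 + / Dh)) < exp ds * 1).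
  { apply exp_mul_lt_of_ln_lt; try lra; now rewrite ln_1, Rplus_0_r. }
  unfold lamW_h, lamW_s.
  replace (2 * exp dh * Ups * INR L * Xi ^ 3 * (1 + / Dh))
    with (exp dh * (2 * (1 + / Dh)) * (Ups * INR L * Xi ^ 3)) by ring.
  replace (exp ds * Ups * INR L * Xi ^ 3)
    with (exp ds * 1 * (Ups * INR L * Xi ^ 3)) by ring.
  now apply Rmult_lt_compat_r.
Qed.

Lemma lamX_h_lt_lamX_s (Xi Gam Ups ds dh Dh beta : R) :
  0 < Xi -> 0 < Gam -> 0 < Ups -> 0 <= beta -> 0 < Dh ->
  dh + ln (2 * Gam * Xi ^ 2 * (1 + beta) * (1 + / Dh) + beta)
    < ds + ln (2 * Gam * Xi ^ 2 + 1) ->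
  lamX_h Xi Gam Ups dh Dh beta < lamX_s Xi Gam Ups ds.
Proof.
  intros hXi hGam hUps hbeta hDh H.
  assert (hinvDh : 0 < / Dh) by now apply Rinv_0_lt_compat.
  assert (hGX : 0 < 2 * Gam * Xi ^ 2).
  { apply Rmult_lt_0_compat; [lra | now apply pow_lt]. }
  assert (hA : 0 < 2 * Gam * Xi ^ 2 * (1 + beta) * (1 + / Dh)).
  { apply Rmult_lt_0_compat; [apply Rmult_lt_0_compat|]; lra. }
  assert (hexp : exp dh * (2 * Gam * Xi ^ 2 * (1 + beta) * (1 + / Dh) + beta)
                 < exp ds * (2 * Gam * Xi ^ 2 + 1)).
  { apply exp_mul_lt_of_ln_lt; lra. }
  unfold lamX_h, lamX_s.
  replace (exp dh * Ups * (beta + 2 * Gam * Xi ^ 2 * (beta + 1) * (1 + / Dh)))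
    with (exp dh * (2 * Gam * Xi ^ 2 * (1 + beta) * (1 + / Dh) + beta) * Ups) by ring.
  replace (exp ds * Ups * (2 * Gam * Xi ^ 2 + 1))
    with (exp ds * (2 * Gam * Xi ^ 2 + 1) * Ups) by ring.
  now apply Rmult_lt_compat_r.
Qed.

Theorem corollary1 (Xi Gam Ups ds beta c1 c2 : R) (L : nat) :
  0 < Xi -> 0 < Gam -> 0 < Ups -> 0 < ds -> (1 <= L)%nat -> 1 < beta ->
  0 < c1 -> 0 < c2 -> ds <= 2 * Gam * Xi ^ 2 ->
  let dh := c1 * ds in
  let Dh := c2 * ds in
  (c1 + / ds * ln (2 * (1 + / (c2 * ds))) < 1 ->
     lamW_h Xi Ups dh Dh L < lamW_s Xi Ups ds L) /\
  (c1 + / ds * ln (2 * Gam * Xi ^ 2 * (1 + beta) * (1 + / (c2 * ds)) + beta)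
      - / ds * ln (2 * Gam * Xi ^ 2 + 1) < 1 ->
     lamX_h Xi Gam Ups dh Dh beta < lamX_s Xi Gam Ups ds).
Proof.
  intros hXi hGam hUps hds hL hbeta _ hc2 _ dh Dh.
  assert (hDh : 0 < Dh) by (apply Rmult_lt_0_compat; assumption).
  split; intro H.
  - apply lamW_h_lt_lamW_s; try assumption.
    now apply mul_lt_of_div_lt.
  - apply lamX_h_lt_lamX_s; try assumption; try lra.
    unfold dh, Dh.
    set (u := ln (2 * Gam * Xi ^ 2 * (1 + beta) * (1 + / (c2 * ds)) + beta)) in *.
    set (v := ln (2 * Gam * Xi ^ 2 + 1)) in *.
    assert (Hdiv : c1 + / ds * (u - v) < 1) by (rewrite Rmult_minus_distr_l; lra).
    apply (mul_lt_of_div_lt _ _ _ hds) in Hdiv; lra.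
Qed.
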